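(* Let $\mathcal{H}$ be a separable infinite-dimensional complex Hilbert space, let $T\in\mathscr{B}(\mathcal{H})$ have dense range and let $\varepsilon>0$. Then the map $x_0\mapsto\|y_{x_0,\varepsilon}\|$ is continuous on the open set $\{x_0\in\mathcal{H}:\|x_0\|>\varepsilon\}$.
   Context: For $T\in\mathscr{B}(\mathcal{H})$ with dense range, $x_0\neq 0$ and $0<\varepsilon<\|x_0\|$, the extremal vector $y_{x_0,\varepsilon}$ is the unique vector $y_0\in\mathcal{H}$ with $\|Ty_0-x_0\|\leqslant\varepsilon$ and $\|y_0\|=\inf\{\|y\|:\|Ty-x_0\|\leqslant\varepsilon\}$. *)

From HB Require Import structures.
From mathcomp Require Import all_boot all_order all_algebra.
From mathcomp Require Import all_classical all_reals all_analysis.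
From mathcomp Require Import complex.
Set Implicit Arguments. Unset Strict Implicit. Unset Printing Implicit Defensive.
Import Order.TTheory GRing.Theory Num.Theory.
Import numFieldNormedType.Exports.
Local Open Scope classical_set_scope.
Local Open Scope ring_scope.

Section HilbertDefs.
Variable R : realType.
Local Notation C := (R[i]).
Variable H : normedModType C.

(* ip is an inner product on H inducing the norm of H:
   linear in the first argument, conjugate symmetric, and <x,x> = ||x||^2.
   (Positive definiteness follows from the norm axioms.) *)
Definition inner_product_of_norm (ip : H -> H -> C) : Prop :=
  [/\ forall (a : C) (x y z : H), ip (a *: x + y) z = a * ip x z + ip y z,
      forall x y : H, ip y x = conjc (ip x y)
    & forall x : H, ip x x = `|x| ^+ 2].

Definition separable_space : Prop :=
  exists D : set H, countable D /\ dense D.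

Definition infinite_dimensional : Prop :=
  forall (n : nat) (v : 'I_n -> H),
    exists x : H, forall c : 'I_n -> C, x <> \sum_(i < n) c i *: v i.

(* real-valued norm ||x|| (the norm of H is C-valued, with real values) *)
Definition rnorm (x : H) : R := complex.Re `|x|.

Definition is_extremal_vector (T : H -> H) (x0 : H) (eps : R) (y0 : H) : Prop :=
  rnorm (T y0 - x0) <= eps /\
  rnorm y0 = inf [set rnorm y | y in [set y : H | rnorm (T y - x0) <= eps]].

(* y_{x0,eps}: the (unique, by the paper) extremal vector, chosen by xget *)
Definition extremal_vector (T : H -> H) (eps : R) (x0 : H) : H :=
  xget 0 (is_extremal_vector T x0 eps).

End HilbertDefs.

From HB Require Import structures.
From mathcomp Require Import all_boot all_order all_algebra.
From mathcomp Require Import all_classical all_reals all_analysis.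
From mathcomp Require Import complex.
From mathcomp Require Import ring lra.
Import Order.TTheory GRing.Theory Num.Theory.
Import numFieldNormedType.Exports.
Local Open Scope classical_set_scope.
Local Open Scope ring_scope.
Local Open Scope complex_scope.

(* The norm of y_{x0,eps} is m(x0) = inf {||y|| : ||T y - x0|| <= eps}.  The
   infimum is attained: by the parallelogram law a minimising sequence is
   Cauchy, and its limit is feasible because T is continuous.  Continuity of m
   only uses convexity: choose z with ||T z - x0|| <= eps/4 (dense range); for x
   near x0, a convex combination of a near-minimiser for one point and z is
   feasible for the other, whence |m x - m x0| <= 2/eps ||z|| ||x - x0||. *)

Section RealNorm.
Context {R : realType} {H : normedModType R[i]}.

Lemma rnormE (x : H) : `|x| = (rnorm x)%:C.
Proof. by rewrite /rnorm RRe_real // normr_real. Qed.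

Lemma rnorm_ge0 (x : H) : 0 <= rnorm x.
Proof. by rewrite -ler0c -rnormE. Qed.

Lemma ler_rnormD (x y : H) : rnorm (x + y) <= rnorm x + rnorm y.
Proof. by rewrite -lecR rmorphD /= -!rnormE ler_normD. Qed.

Lemma rnorm_distC (x y : H) : rnorm (x - y) = rnorm (y - x).
Proof. by rewrite /rnorm distrC. Qed.

Lemma rnormZ (s : R) (x : H) : 0 <= s -> rnorm (s%:C *: x) = s * rnorm x.
Proof.
move=> s0; apply: complexI.
by rewrite -rnormE normrZ ger0_norm ?ler0c // rnormE rmorphM.
Qed.

Lemma normr_ltc (x : H) (e : R) : (`|x| < e%:C) = (rnorm x < e).
Proof. by rewrite rnormE ltcR. Qed.

Lemma near_rnorm_lt (x : H) {e : R} : 0 < e -> \forall t \near x, rnorm (t - x) < e.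
Proof.
move=> e0; have : (fun t : H => t) @ x --> x := cvg_id.
move=> /cvgr_dist_lt /(_ e%:C); rewrite ltcR => /(_ e0); apply: filterS => t.
by rewrite normr_ltc rnorm_distC.
Qed.

Lemma rnorm_cvg_le {u : nat -> H} {y : H} {c : R} : u @ \oo --> y ->
  (forall e, 0 < e -> \forall n \near \oo, rnorm (u n) <= c + e) -> rnorm y <= c.
Proof.
move=> uy ub; apply/ler_addgt0Pr => e e0.
have e2 : 0 < e / 2 by rewrite divr_gt0.
have /cvgr_dist_lt/(_ (e / 2)%:C) := uy; rewrite ltcR => /(_ e2) uy2.
have [n [/= yun un]] := filter_ex (filterI uy2 (ub _ e2)).
rewrite normr_ltc in yun.
have := ler_rnormD (y - u n) (u n); rewrite subrK; lra.
Qed.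

End RealNorm.

Section Parallelogram.
Context {R : realType} {H : normedModType R[i]}.
Context {ip : H -> H -> R[i]}.
Hypothesis ip_norm : inner_product_of_norm ip.

Lemma parallelogram_rnorm (x y : H) :
  rnorm (x + y) ^+ 2 + rnorm (x - y) ^+ 2 = 2 * rnorm x ^+ 2 + 2 * rnorm y ^+ 2.
Proof.
case: ip_norm => lin sym nrm.
have sq v : (rnorm v ^+ 2)%:C = ip v v by rewrite nrm rnormE -rmorphXn.
have ipDl a b c : ip (a + b) c = ip a c + ip b c.
  by rewrite -{1}(scale1r a) lin mul1r.
have ip0l c : ip 0 c = 0 by apply/(addrI (ip 0 c)); rewrite -ipDl !addr0.
have ipNl a c : ip (- a) c = - ip a c.
  by apply/(addrI (ip a c)); rewrite -ipDl !subrr ip0l.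
have ipDr a b c : ip c (a + b) = ip c a + ip c b.
  by rewrite sym ipDl rmorphD /= -!sym.
have ipNr a c : ip c (- a) = - ip c a.
  by rewrite sym ipNl rmorphN /= -sym.
have sq2 v : (2 * rnorm v ^+ 2)%:C = 2 * ip v v.
  by rewrite rmorphM /= sq rmorph_nat.
apply: complexI; rewrite !rmorphD /= !sq2 !sq.
by rewrite !ipDl !ipDr !ipNl !ipNr opprK; ring.
Qed.

End Parallelogram.

Section MinimalNorm.
Context {R : realType} {H : normedModType R[i]}.
Variable T : {linear H -> H}.
Hypothesis Tdense : closure (range T) = setT.

Lemma exists_residual_lt (x : H) {e : R} : 0 < e -> exists z, rnorm (T z - x) < e.
Proof.
move=> e0; have : closure (range T) x by rewrite Tdense.
by move=> /(_ _ (near_rnorm_lt x e0)) [_ [[z _ <-] ?]]; exists z.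
Qed.

Lemma residual_convex_comb (y z a b : H) (s : R) :
  T ((1 - s)%:C *: y + s%:C *: z) - b =
  (1 - s)%:C *: (T y - a) + s%:C *: (T z - a) + (a - b).
Proof.
have sumE : (1 - s)%:C *: a + s%:C *: a = a.
  by rewrite -scalerDl -rmorphD subrK rmorph1 scale1r.
rewrite linearD !linearZ /= !scalerBr (addrACA ((1 - s)%:C *: T y)).
by rewrite -opprD sumE addrA subrK.
Qed.

Variable eps : R.
Hypothesis eps_gt0 : 0 < eps.

Definition feasible (x : H) := [set y : H | rnorm (T y - x) <= eps].
Definition min_norm (x : H) := inf [set rnorm y | y in feasible x].

Lemma has_inf_min_norm (x : H) : has_inf [set rnorm y | y in feasible x].
Proof.
split; last by exists 0 => _ [y _ <-]; exact: rnorm_ge0.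
have [z hz] := exists_residual_lt x eps_gt0.
by exists (rnorm z), z => //; rewrite /feasible /= ltW.
Qed.

Lemma min_norm_le {x y : H} : feasible x y -> min_norm x <= rnorm y.
Proof. by move=> hy; apply: (ge_inf (proj2 (has_inf_min_norm x))); exists y. Qed.

Lemma min_norm_ge0 (x : H) : 0 <= min_norm x.
Proof.
apply: lb_le_inf; first exact: (proj1 (has_inf_min_norm x)).
by move=> _ [y _ <-]; exact: rnorm_ge0.
Qed.

Lemma feasible_convex {x y z : H} {s : R} : 0 <= s <= 1 ->
  feasible x y -> feasible x z -> feasible x ((1 - s)%:C *: y + s%:C *: z).
Proof.
move=> /andP[s0 s1] hy hz; have s1' : 0 <= 1 - s by rewrite subr_ge0.
rewrite /feasible /= (residual_convex_comb _ _ x) subrr addr0.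
apply: le_trans (ler_rnormD _ _) _; rewrite !rnormZ //.
move: hy hz; rewrite /feasible /=; nra.
Qed.

(* Mixing a near-minimiser for [a] with [z], whose residual has slack [g],
   stays feasible for the nearby point [b]. *)
Lemma min_norm_le_shift {a b z : H} {g : R} : 0 < g ->
  rnorm (T z - a) <= eps - g -> rnorm (b - a) <= g ->
  min_norm b <= min_norm a + rnorm (b - a) / g * rnorm z.
Proof.
move=> g0 hz hba; set s := rnorm (b - a) / g.
have s0 : 0 <= s by rewrite divr_ge0 ?rnorm_ge0 ?ltW.
have s1 : 0 <= 1 - s by rewrite subr_ge0 ler_pdivrMr // mul1r.
have sg : rnorm (b - a) = s * g by rewrite /s divfK ?gt_eqF.
apply/ler_addgt0Pr => h h0.
have [_ [y hy <-] hlt] := inf_adherent h0 (has_inf_min_norm a).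
set w := (1 - s)%:C *: y + s%:C *: z.
have hw : feasible b w.
  rewrite /feasible /= (residual_convex_comb _ _ a).
  apply: le_trans (ler_rnormD _ _) _; rewrite rnorm_distC sg.
  apply: le_trans (lerD (ler_rnormD _ _) (lexx _)) _; rewrite !rnormZ //.
  move: hy; rewrite /feasible /=; nra.
have hnw : rnorm w <= (1 - s) * rnorm y + s * rnorm z.
  by apply: le_trans (ler_rnormD _ _) _; rewrite !rnormZ.
have := min_norm_le hw; have := rnorm_ge0 y; have := rnorm_ge0 z.
rewrite -/(min_norm a) in hlt; nra.
Qed.

Lemma min_norm_local_lipschitz {x0 z x : H} :
  rnorm (T z - x0) <= eps / 4 -> rnorm (x - x0) <= eps / 4 ->
  `|min_norm x - min_norm x0| <= 2 / eps * rnorm z * rnorm (x - x0).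
Proof.
move=> hz hx.
have g0 : 0 < eps / 2 by rewrite divr_gt0.
have lipE : rnorm (x - x0) / (eps / 2) * rnorm z = 2 / eps * rnorm z * rnorm (x - x0).
  by field; rewrite gt_eqF.
have hzx : rnorm (T z - x) <= eps - eps / 2.
  have := ler_rnormD (T z - x0) (x0 - x); rewrite addrA subrK rnorm_distC; lra.
have hx2 : rnorm (x - x0) <= eps / 2 by lra.
have hz2 : rnorm (T z - x0) <= eps - eps / 2 by lra.
have := min_norm_le_shift g0 hz2 hx2; rewrite lipE => up.
have := @min_norm_le_shift x x0 z _ g0 hzx; rewrite (rnorm_distC x0 x) lipE.
by move=> /(_ hx2) dn; rewrite ler_norml; apply/andP; split; lra.
Qed.

Lemma continuous_min_norm : continuous min_norm.
Proof.
move=> x0; apply/cvgrPdist_lt => e e0.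
have e4 : 0 < eps / 4 by rewrite divr_gt0.
have [z hz] := exists_residual_lt x0 e4.
set L := 2 / eps * rnorm z.
have L0 : 0 <= L by rewrite mulr_ge0 ?rnorm_ge0 // divr_ge0 // ltW.
have d0 : 0 < Num.min (eps / 4) (e / (L + 1)).
  by rewrite lt_min e4 divr_gt0 //; lra.
apply: filterS (near_rnorm_lt x0 d0) => x; rewrite lt_min => /andP[hx hxe].
rewrite distrC; apply: le_lt_trans (min_norm_local_lipschitz (ltW hz) (ltW hx)) _.
rewrite -/L; have r0 := rnorm_ge0 (x - x0).
move: hxe; rewrite ltr_pdivlMr; last by lra.
nra.
Qed.

Definition minimizing (x : H) (u : nat -> H) :=
  forall n, feasible x (u n) /\ rnorm (u n) < min_norm x + n.+1%:R^-1.

Lemma exists_minimizing (x : H) : exists u, minimizing x u.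
Proof.
suff /choice[u hu] : forall n, exists y,
    feasible x y /\ rnorm y < min_norm x + n.+1%:R^-1 by exists u.
move=> n; have n0 : 0 < (n.+1%:R^-1 : R) by rewrite invr_gt0.
by have [_ [y hy <-] hlt] := inf_adherent n0 (has_inf_min_norm x); exists y.
Qed.

Lemma minimizing_rnorm_near {x : H} {u : nat -> H} : minimizing x u ->
  forall e, 0 < e -> \forall n \near \oo, rnorm (u n) <= min_norm x + e.
Proof.
move=> mu e e0; apply: filterS (near_infty_natSinv_lt (PosNum e0)) => n /= hn.
by apply: ltW; apply: lt_trans (proj2 (mu n)) _; rewrite ltrD2l.
Qed.

End MinimalNorm.

Section ExtremalVector.
Context {R : realType} {H : completeNormedModType R[i]}.
Context {ip : H -> H -> R[i]}.
Hypothesis ip_norm : inner_product_of_norm ip.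
Variable T : {linear H -> H}.
Hypothesis Tcont : continuous T.
Hypothesis Tdense : closure (range T) = setT.
Variable eps : R.
Hypothesis eps_gt0 : 0 < eps.

Local Notation feasible := (feasible T eps).
Local Notation min_norm := (min_norm T eps).
Local Notation minimizing := (minimizing T eps).
Local Notation min_norm_le := (min_norm_le T Tdense eps eps_gt0).

Lemma rnorm_sub_feasible_sqr {x a b : H} : feasible x a -> feasible x b ->
  rnorm (a - b) ^+ 2 <= 2 * rnorm a ^+ 2 + 2 * rnorm b ^+ 2 - 4 * min_norm x ^+ 2.
Proof.
move=> ha hb; have half01 : 0 <= (2^-1 : R) <= 1.
  by rewrite invr_ge0 ler0n /= invf_le1 ?ltr0n // ler1n.
have := feasible_convex T eps half01 ha hb.
have -> : 1 - 2^-1 = 2^-1 :> R by field.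
rewrite -scalerDr => /min_norm_le; rewrite rnormZ ?invr_ge0 //.
have := parallelogram_rnorm ip_norm a b; have := min_norm_ge0 T Tdense eps eps_gt0 x.
have := rnorm_ge0 (a + b); nra.
Qed.

Lemma minimizing_cauchy {x : H} {u : nat -> H} :
  minimizing x u -> cauchy_ex (u @ \oo).
Proof.
move=> mu e e_gt0; have eE : e = (complex.Re e)%:C.
  by rewrite RRe_real // realE ltW.
set e' := complex.Re e; have e'0 : 0 < e' by move: e_gt0; rewrite eE ltcR.
set d := min_norm x; have d0 : 0 <= d := min_norm_ge0 T Tdense eps eps_gt0 x.
set c := Num.min (e' ^+ 2 / (4 * (2 * d + 1))) 1.
have c0 : 0 < c by rewrite lt_min ltr01 andbT divr_gt0 ?exprn_gt0 //; lra.
have c1 : c <= 1 by rewrite ge_min lexx orbT.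
have c2 : c * (4 * (2 * d + 1)) <= e' ^+ 2.
  by rewrite -ler_pdivlMr ?ge_min ?lexx //; lra.
have [N _ hN] := near_infty_natSinv_lt (PosNum c0).
have sqr_close k : (N <= k)%N -> rnorm (u k) ^+ 2 - d ^+ 2 < c * (2 * d + 1).
  move=> /hN /= kc; have [/min_norm_le dk uk] := mu k.
  rewrite -/d in dk uk; have ukc : rnorm (u k) < d + c.
    by apply: lt_trans uk _; rewrite ltrD2l.
  have : rnorm (u k) + d <= 2 * d + 1 by lra.
  have : rnorm (u k) - d < c by lra.
  nra.
exists (u N), N => // n /= hn; rewrite -ball_normE /= eE normr_ltc.
have := rnorm_sub_feasible_sqr (mu N).1 (mu n).1; rewrite -/d.
have := sqr_close N (leqnn N); have := sqr_close n hn.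
have := rnorm_ge0 (u N - u n); nra.
Qed.

Lemma feasible_cvg {x y : H} {u : nat -> H} :
  (forall n, feasible x (u n)) -> u @ \oo --> y -> feasible x y.
Proof.
move=> hu uy; apply: (rnorm_cvg_le (u := fun n => T (u n) - x)).
  exact: cvgB (cvg_comp _ _ uy (Tcont y)) (cvg_cst _).
move=> e e0; apply: nearW => n.
by apply: le_trans (hu n) _; rewrite lerDl ltW.
Qed.

Lemma exists_extremal_vector (x : H) : exists y, is_extremal_vector T x eps y.
Proof.
have [u mu] := exists_minimizing T Tdense eps eps_gt0 x.
have cv : cvg (u @ \oo).
  by apply: cauchy_cvg; apply: cauchy_exP; exact: minimizing_cauchy mu.
have hy : feasible x (lim (u @ \oo)) by apply: feasible_cvg cv => n; case: (mu n).
exists (lim (u @ \oo)); split => //; apply/eqP; rewrite eq_le (min_norm_le hy) andbT.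
exact: rnorm_cvg_le cv (minimizing_rnorm_near T eps mu).
Qed.

Lemma rnorm_extremal_vector (x : H) :
  rnorm (extremal_vector T eps x) = min_norm x.
Proof.
rewrite /extremal_vector.
by case: (xgetPex 0 (exists_extremal_vector x)) => _ ->.
Qed.

End ExtremalVector.

Theorem mainTheorem7 (R : realType) (H : completeNormedModType R[i])
  (ip : H -> H -> R[i]) (Hip : inner_product_of_norm ip)
  (Hsep : separable_space H) (Hinf : infinite_dimensional H)
  (T : {linear H -> H}) (Tcont : continuous T)
  (Tdense : closure (range T) = setT)
  (eps : R) (heps : 0 < eps) :
  {within [set x0 : H | eps < rnorm x0],
    continuous (fun x : H => rnorm (extremal_vector T eps x))}.
Proof.
have -> : (fun x => rnorm (extremal_vector T eps x)) = min_norm T eps.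
  by apply: funext => x; rewrite (rnorm_extremal_vector Hip T Tcont Tdense eps heps).
exact/continuous_subspaceT/(continuous_min_norm T Tdense eps heps).
Qed.
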